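(* Let $\mathcal C$ be a category of noncrossing $\{x,y\}$-coloured partitions ($x^{-1}=x$, $y^{-1}=y$) all of whose blocks have even size. If $\mathcal C$ contains a partition with a block of size at least four, then $\pi(xx,xx)\in\mathcal C$ or $\pi(yy,yy)\in\mathcal C$.
   Context: Colour sets and partitions: a colour set is a set $\mathcal A$ with an involution $a\mapsto a^{-1}$. For words $w,w'$ on $\mathcal A$, an element of $P^{\mathcal A}(w,w')$ is a partition of $|w|+|w'|$ points drawn as an upper row coloured (left to right) by $w$ and a lower row coloured by $w'$; its subsets are blocks. It is noncrossing if there are no four points $k_1<k_2<k_3<k_4$ (ordering: upper row left to right, then lower row right to left) with $k_1,k_3$ in one block and $k_2,k_4$ in a different block. Category operations: tensor product, composition (erasing middle points and closed loops), adjoint (reflection), rotation (moving an extreme point to the other row and replacing its colour $a$ by $a^{-1}$). A category of noncrossing partitions is a family $\mathcal C(w,w')\subset NC^{\mathcal A}(w,w')$ stable under these operations and containing $\pi(a,a)$ for all $a$. $\pi(w,w')$ denotes the one-block partition in $NC(w,w')$. *)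

From mathcomp Require Import all_boot.
Set Implicit Arguments. Unset Strict Implicit. Unset Printing Implicit Defensive.

(* Points are numbered 0 .. size pu - 1 for the
   upper row (left to right) followed by size pu .. size pu + size pl - 1 for the
   lower row (left to right).  Two points lie in the same block iff they carry
   the same label.  Labels are only a representation: categories are required
   to be closed under change of representation ([peq]). *)
Record part (A : Type) := Part { pu : seq A; pl : seq A; lab : seq nat }.

Definition npts A (p : part A) := size (pu p) + size (pl p).
Definition wf A (p : part A) := size (lab p) == npts p.

Definition blk A (p : part A) (i j : nat) : bool :=
  [&& i < npts p, j < npts p & nth 0 (lab p) i == nth 0 (lab p) j].

Definition block_size A (p : part A) (i : nat) := count (blk p i) (iota 0 (npts p)).

Definition peq A (p q : part A) : Prop :=
  [/\ pu p = pu q, pl p = pl q & forall i j, blk p i j = blk q i j].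

(* cyclic order: upper row left to right, then lower row right to left;
   [cyc p t] is the point at cyclic position t (an involution). *)
Definition cyc A (p : part A) (t : nat) : nat :=
  let k := size (pu p) in
  if t < k then t else k + (size (pl p)).-1 - (t - k).

Definition noncrossing A (p : part A) : Prop :=
  forall k1 k2 k3 k4, k1 < k2 -> k2 < k3 -> k3 < k4 -> k4 < npts p ->
    blk p (cyc p k1) (cyc p k3) -> blk p (cyc p k2) (cyc p k4) ->
    blk p (cyc p k1) (cyc p k2).

Definition onebl A (w w' : seq A) : part A := Part w w' (nseq (size w + size w') 0).

Definition tensor A (p q : part A) : part A :=
  let m := (foldr maxn 0 (lab p)).+1 in
  let kp := size (pu p) in let kq := size (pu q) in
  Part (pu p ++ pu q) (pl p ++ pl q)
       (take kp (lab p) ++ map (addn m) (take kq (lab q)) ++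
        drop kp (lab p) ++ map (addn m) (drop kq (lab q))).

Definition adjoint A (p : part A) : part A :=
  Part (pl p) (pu p) (drop (size (pu p)) (lab p) ++ take (size (pu p)) (lab p)).

(* composition: p on top (in P(w,w')), q below (in P(w',w'')).
   Global nodes: points of p are 0..npts p - 1, points of q are
   npts p .. npts p + npts q - 1; lower point i of p is glued to upper point i of q. *)
Definition cedge A (p q : part A) (a b : nat) : bool :=
  let np := npts p in let kp := size (pu p) in
  [|| blk p a b,
      [&& np <= a, np <= b & blk q (a - np) (b - np)],
      [&& kp <= a, a < np & b == np + (a - kp)] |
      [&& kp <= b, b < np & a == np + (b - kp)] ].

Definition cemb A (p q : part A) (i : nat) : nat :=
  if i < size (pu p) then i else npts p + size (pu q) + (i - size (pu p)).

(* same-block relation of the composite: connected through the middle points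
   (middle points and closed loops are erased) *)
Definition comprel A (p q : part A) (i j : nat) : bool :=
  [&& i < size (pu p) + size (pl q), j < size (pu p) + size (pl q) &
      connect [rel a b : 'I_(npts p + npts q).+1 | cedge p q a b]
              (inord (cemb p q i)) (inord (cemb p q j))].

Record is_category (A : Type) (inv : A -> A) (C : part A -> Prop) : Prop := {
  cat_wf : forall p, C p -> wf p;
  cat_nc : forall p, C p -> noncrossing p;
  cat_repr : forall p q, C p -> wf q -> peq p q -> C q;
  cat_id : forall a, C (Part [:: a] [:: a] [:: 0; 0]);
  cat_tensor : forall p q, C p -> C q -> C (tensor p q);
  cat_adjoint : forall p, C p -> C (adjoint p);
  cat_comp : forall p q r, C p -> C q -> pl p = pu q ->
      wf r -> pu r = pu p -> pl r = pl q ->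
      (forall i j, blk r i j = comprel p q i j) -> C r;
  cat_rotl1 : forall a w w' u us ls, size us = size w -> size ls = size w' ->
      C (Part (a :: w) w' (u :: us ++ ls)) -> C (Part w (inv a :: w') (us ++ u :: ls));
  cat_rotl2 : forall a w w' u us ls, size us = size w -> size ls = size w' ->
      C (Part w (a :: w') (us ++ u :: ls)) -> C (Part (inv a :: w) w' (u :: us ++ ls));
  cat_rotr1 : forall a w w' u us ls, size us = size w -> size ls = size w' ->
      C (Part (rcons w a) w' (rcons us u ++ ls)) -> C (Part w (rcons w' (inv a)) (us ++ rcons ls u));
  cat_rotr2 : forall a w w' u us ls, size us = size w -> size ls = size w' ->
      C (Part w (rcons w' a) (us ++ rcons ls u)) -> C (Part (rcons w (inv a)) w' (rcons us u ++ ls))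
}.

Definition xc : bool := false.
Definition yc : bool := true.
Definition xyinv : bool -> bool := id.

(* Read the points of a partition in cyclic order.  Pick three points
   x < y < z of one block.  By rotation, the arc from x to y becomes the upper
   row of a partition q of the category, with its two endpoints in the block
   and z on the lower row.  In q composed with its adjoint, the upper row and
   the lower row are both this arc, and both endpoints of both rows lie in a
   single block.  In the cyclic order of this composite the last upper point
   and the last lower point are adjacent; they have colours c and c^-1 and form
   a new arc of length two, with a third point of the block elsewhere.
   Repeating the construction on this arc yields the one-block partition
   pi(c c^-1, c c^-1). *)

From mathcomp Require Import all_boot zify.
Set Implicit Arguments. Unset Strict Implicit. Unset Printing Implicit Defensive.

Section Points.
Variable A : Type.
Implicit Types p : part A.

Lemma cyc_lt p t : t < npts p -> cyc p t < npts p.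
Proof. by rewrite /cyc /npts; case: ifP; lia. Qed.

Lemma cycK p t : t < npts p -> cyc p (cyc p t) = t.
Proof.
rewrite /cyc /npts => ht; case: (ltnP t (size (pu p))) => h; first by rewrite h.
by rewrite ifF; lia.
Qed.

Lemma cyc_upper p t : t < size (pu p) -> cyc p t = t.
Proof. by rewrite /cyc => ->. Qed.

Lemma cyc_lower p t : size (pu p) <= t < npts p -> size (pu p) <= cyc p t.
Proof. by rewrite /cyc /npts => /andP [h h']; rewrite ltnNge h /=; lia. Qed.

Lemma blk_sym p i j : blk p i j = blk p j i.
Proof. by rewrite /blk eq_sym andbCA. Qed.

Lemma blk_trans p j i l : blk p i j -> blk p j l -> blk p i l.
Proof.
by rewrite /blk => /and3P [-> _ /eqP ->] /and3P [_ -> ->].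
Qed.

Definition clab p : seq nat :=
  take (size (pu p)) (lab p) ++ rev (drop (size (pu p)) (lab p)).

Lemma size_clab p : wf p -> size (clab p) = npts p.
Proof.
rewrite /wf /clab /npts => /eqP e; rewrite size_cat size_rev size_drop size_takel; lia.
Qed.

Lemma nth_clab p t : wf p -> t < npts p ->
  nth 0 (clab p) t = nth 0 (lab p) (cyc p t).
Proof.
rewrite /wf /npts /clab /cyc => /eqP e ht; rewrite nth_cat size_takel; last lia.
case: ltnP => h; first by rewrite nth_take.
rewrite nth_rev size_drop e; last lia.
rewrite nth_drop; congr nth; lia.
Qed.

Lemma blk_cyc p t t' : wf p -> t < npts p -> t' < npts p ->
  blk p (cyc p t) (cyc p t') = (nth 0 (clab p) t == nth 0 (clab p) t').
Proof. by move=> w ht ht'; rewrite /blk !cyc_lt // !nth_clab. Qed.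

End Points.

Lemma nth_rot (T : Type) (x0 : T) (s : seq T) n i : i + n < size s ->
  nth x0 (rot n s) i = nth x0 s (i + n).
Proof.
by move=> h; rewrite /rot nth_cat size_drop ifT ?nth_drop 1?addnC //; lia.
Qed.

Section CyclicForm.
Variables (A : Type) (inv : A -> A).
Implicit Types (p : part A) (s : seq A) (ls : seq nat).

(* [cpart k s ls] has colours [s] and labels [ls] in cyclic order, its first
   [k] points forming the upper row.  Lower colours are stored inverted, so
   that the rotation axioms act on [cpart] by moving [k] or rotating [s]. *)
Definition cpart k s ls : part A :=
  Part (take k s) (map inv (rev (drop k s))) (take k ls ++ rev (drop k ls)).

Definition cword p : seq A := pu p ++ map inv (rev (pl p)).

Lemma size_cword p : size (cword p) = npts p.
Proof. by rewrite /cword size_cat size_map size_rev. Qed.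

Lemma size_pu_cpart k s ls : k <= size s -> size (pu (cpart k s ls)) = k.
Proof. exact: size_takel. Qed.

Lemma npts_cpart k s ls : k <= size s -> npts (cpart k s ls) = size s.
Proof. by move=> h; rewrite /npts size_pu_cpart //= size_map size_rev size_drop; lia. Qed.

Lemma wf_cpart k s ls : k <= size s -> size ls = size s -> wf (cpart k s ls).
Proof.
move=> h e; rewrite /wf npts_cpart //= size_cat size_rev size_drop size_takel; lia.
Qed.

Lemma clab_cpart k s ls : k <= size s -> size ls = size s -> clab (cpart k s ls) = ls.
Proof.
move=> h e; rewrite /clab size_pu_cpart //= take_size_cat ?size_takel; try lia.
by rewrite drop_size_cat ?size_takel ?revK ?cat_take_drop //; lia.
Qed.

Lemma cpartE p : involutive inv -> wf p -> p = cpart (size (pu p)) (cword p) (clab p).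
Proof.
case: p => u l lb invK; rewrite /wf /npts /cpart /cword /clab /= => /eqP e.
have Ht : size (take (size u) lb) = size u by rewrite size_takel; lia.
rewrite take_size_cat // drop_size_cat // take_size_cat // drop_size_cat //.
by rewrite -map_rev !revK (mapK invK) cat_take_drop.
Qed.

End CyclicForm.

Section CategoryMoves.
Variables (A : Type) (inv : A -> A) (C : part A -> Prop).
Hypothesis HC : is_category inv C.
Hypothesis invK : involutive inv.
Implicit Types (s : seq A) (ls : seq nat).

Local Notation cpart := (cpart inv).

Lemma cat_cpart_pred k s ls : size ls = size s -> k < size s ->
  C (cpart k.+1 s ls) -> C (cpart k s ls).
Proof.
move=> e h; have [x0 _] : exists x0 : A, True by case: s h {e} => // x; exists x.
rewrite /cpart (take_nth x0) // (take_nth 0) ?e //.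
rewrite (drop_nth x0 h) (drop_nth 0 (_ : k < size ls)) ?e // !rev_cons map_rcons.
by apply: (cat_rotr1 HC); rewrite ?size_takel ?size_map ?size_rev ?size_drop ?e //; lia.
Qed.

Lemma cat_cpart_succ k s ls : size ls = size s -> k < size s ->
  C (cpart k s ls) -> C (cpart k.+1 s ls).
Proof.
move=> e h; have [x0 _] : exists x0 : A, True by case: s h {e} => // x; exists x.
rewrite /cpart (take_nth x0) // (take_nth 0) ?e //.
rewrite (drop_nth x0 h) (drop_nth 0 (_ : k < size ls)) ?e // !rev_cons map_rcons.
rewrite -{2}(invK (nth x0 s k)).
by apply: (cat_rotr2 HC); rewrite ?size_takel ?size_map ?size_rev ?size_drop ?e //; lia.
Qed.

Lemma cat_cpart_split k k' s ls : size ls = size s -> k <= size s -> k' <= size s ->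
  C (cpart k s ls) -> C (cpart k' s ls).
Proof.
move=> e hk hk' Ck; case: (leqP k k') => hkk'.
  suff up d : k + d <= size s -> C (cpart (k + d) s ls).
    by rewrite -(subnKC hkk') in hk' *; apply: up.
  elim: d => [|d IH] hd; first by rewrite addn0.
  by rewrite addnS; apply: cat_cpart_succ => //; [lia | apply: IH; lia].
suff down d : d <= k -> C (cpart (k - d) s ls).
  by rewrite -(subKn (ltnW hkk')); apply: down; apply: leq_subr.
elim: d => [|d IH] hd; first by rewrite subn0.
apply: cat_cpart_pred => //; first lia.
have -> : (k - d.+1).+1 = k - d by lia.
by apply: IH; lia.
Qed.

Lemma cat_cpart_rot1 s ls : size ls = size s -> C (cpart 1 s ls) ->
  C (cpart 0 (rot 1 s) (rot 1 ls)).
Proof.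
case: s ls => [|a s] [|u ls] //= [e].
rewrite /cpart /= !take0 !drop0 !rot1_cons !rev_rcons => Cp.
by apply: (cat_rotl1 HC) Cp; rewrite // size_map !size_rev.
Qed.

Lemma cat_cpart_rot k k' j s ls : size ls = size s -> k <= size s -> k' <= size s ->
  j <= size s -> C (cpart k s ls) -> C (cpart k' (rot j s) (rot j ls)).
Proof.
move=> e hk + + Ck; elim: j k' => [|j IH] k' hk' hj.
  by rewrite !rot0; apply: (cat_cpart_split e hk hk' Ck).
rewrite (rotS (s := s)) // (rotS (s := ls)) ?e //.
apply: (cat_cpart_split (k := 0)); rewrite ?size_rot //.
by apply: cat_cpart_rot1; [rewrite !size_rot | apply: IH; lia].
Qed.

End CategoryMoves.

(* Labelling each point by the least point related to it realises an
   equivalence relation as the blocks of a partition. *)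
Lemma blk_find_labels (A : Type) (u l : seq A) (e : rel nat) (N := size u + size l) :
  (forall i j, e i j -> i < N) -> (forall i, i < N -> e i i) ->
  symmetric e -> transitive e ->
  forall i j, blk (Part u l [seq find (e i) (iota 0 N) | i <- iota 0 N]) i j = e i j.
Proof.
move=> supp refl sym trans i j; rewrite /blk /npts /= -/N.
have e_out a b : N <= a -> e a b = false by move=> ha; apply/negP => /supp; rewrite ltnNge ha.
case: (ltnP i N) => hi; last by rewrite e_out.
case: (ltnP j N) => hj; last by rewrite sym e_out // andbF.
rewrite !(nth_map 0) ?size_iota // !nth_iota // !add0n /=.
apply/eqP/idP => [eq_find_ij | eij]; last first.
  have eji : e j i by rewrite sym.
  by apply: eq_find => m; apply/idP/idP; [exact: trans eji | exact: trans eij].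
have has_e t : t < N -> has (e t) (iota 0 N).
  by move=> ht; apply/hasP; exists t; rewrite ?mem_iota ?refl.
have := nth_find 0 (has_e i hi); have := nth_find 0 (has_e j hj).
move: (has_e i hi); rewrite has_find size_iota => lt_find.
rewrite eq_find_ij nth_iota -?eq_find_ij // add0n => ejm eim.
by apply: trans eim _; rewrite sym.
Qed.

Section Composition.
Variable A : Type.
Implicit Types p q : part A.

Lemma cedge_sym p q : symmetric (cedge p q).
Proof.
move=> a b; rewrite /cedge (blk_sym p a) (blk_sym q (a - _)) (andbCA (_ <= a)).
by case: [&& size (pu p) <= a, _ & _]; case: [&& size (pu p) <= b, _ & _]; rewrite ?orbT ?orbF.
Qed.

Lemma cedge_upper p q a b : blk p a b -> cedge p q a b.
Proof. by rewrite /cedge => ->. Qed.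

Lemma cedge_lower p q a b : npts p <= a -> npts p <= b ->
  blk q (a - npts p) (b - npts p) -> cedge p q a b.
Proof. by move=> ha hb e; rewrite /cedge ha hb e orbT. Qed.

Lemma cedge_glue p q t : t < size (pl p) -> cedge p q (size (pu p) + t) (npts p + t).
Proof.
move=> ht; apply/or4P; apply: Or43; apply/and3P; split; rewrite /npts ?leq_addr ?ltn_add2l //.
by rewrite addKn.
Qed.

Lemma comprel_sym p q : symmetric (comprel p q).
Proof.
move=> i j; rewrite /comprel andbCA sym_connect_sym // => a b /=.
exact: cedge_sym.
Qed.

Lemma comprel_trans p q : transitive (comprel p q).
Proof.
move=> j i l; rewrite /comprel => /and3P [-> _ cij] /and3P [_ -> cjl] /=.
exact: connect_trans cij cjl.
Qed.

Lemma comprel_refl p q i : i < size (pu p) + size (pl q) -> comprel p q i i.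
Proof. by move=> h; rewrite /comprel h connect0. Qed.

Lemma connect_cedge p q a b : a <= npts p + npts q -> b <= npts p + npts q ->
  cedge p q a b ->
  connect [rel a b : 'I_(npts p + npts q).+1 | cedge p q a b] (inord a) (inord b).
Proof. by move=> ha hb e; apply: connect1; rewrite /= !inordK. Qed.

Variables (inv : A -> A) (C : part A -> Prop).
Hypothesis HC : is_category inv C.

Lemma cat_comp_exists p q : C p -> C q -> pl p = pu q ->
  exists2 r, C r & [/\ pu r = pu p, pl r = pl q & forall i j, blk r i j = comprel p q i j].
Proof.
move=> Cp Cq e; set N := size (pu p) + size (pl q).
set r := Part (pu p) (pl q) [seq find (comprel p q i) (iota 0 N) | i <- iota 0 N].
have blk_r : forall i j, blk r i j = comprel p q i j.
  apply: blk_find_labels; first by move=> i j /andP [].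
  - exact: comprel_refl.
  - exact: comprel_sym.
  - exact: comprel_trans.
exists r => //; apply: (cat_comp HC Cp Cq e) => //.
by rewrite /wf /npts /= size_map size_iota.
Qed.

End Composition.

Section Adjoint.
Variable A : Type.
Implicit Types p : part A.

Lemma blk_adjoint p t i : wf p -> t < size (pl p) -> i < size (pu p) ->
  blk (adjoint p) t (size (pl p) + i) = blk p (size (pu p) + t) i.
Proof.
rewrite /wf /blk /npts /= => /eqP e ht hi.
rewrite !nth_cat size_drop e ifT; last lia.
rewrite ifF; last lia.
rewrite nth_drop nth_take; last lia.
have -> : size (pl p) + i - (size (pu p) + size (pl p) - size (pu p)) = i by lia.
by rewrite !ltn_add2l ht hi (ltn_addr _ ht) (ltn_addr _ hi).
Qed.

Lemma comprel_adjoint_upper p i j : i < size (pu p) -> j < size (pu p) ->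
  blk p i j -> comprel p (adjoint p) i j.
Proof.
move=> hi hj bij; rewrite /comprel /cemb hi hj (ltn_addr _ hi) (ltn_addr _ hj) /=.
by apply: connect_cedge; rewrite /cedge ?bij // /npts /=; lia.
Qed.

Lemma comprel_adjoint_lower p i i' t : wf p ->
  i < size (pu p) -> i' < size (pu p) -> t < size (pl p) ->
  blk p i (size (pu p) + t) -> blk p i' (size (pu p) + t) ->
  comprel p (adjoint p) i (size (pu p) + i').
Proof.
move=> w hi hi' ht bit bi't; rewrite /comprel /cemb /= hi ifF ?addKn; last lia.
rewrite (ltn_addr _ hi) ltn_add2l hi' /=.
apply: (connect_trans (y := inord (size (pu p) + t))).
  by apply: connect_cedge; [rewrite /npts /=; lia..| exact: cedge_upper].
apply: (connect_trans (y := inord (npts p + t))).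
  by apply: connect_cedge; [rewrite /npts /=; lia..| exact: cedge_glue].
apply: connect_cedge; [rewrite /npts /=; lia..| apply: cedge_lower; rewrite /npts; try lia].
by rewrite -[_ + size (pl p) + i']addnA !addKn blk_adjoint // blk_sym.
Qed.

Variables (inv : A -> A) (C : part A -> Prop).
Hypothesis HC : is_category inv C.

Lemma cat_double p i i' t : C p ->
  i < size (pu p) -> i' < size (pu p) -> t < size (pl p) ->
  blk p i (size (pu p) + t) -> blk p i' (size (pu p) + t) ->
  exists2 r, C r & [/\ pu r = pu p, pl r = pu p, blk r i i',
    blk r i (size (pu p) + i) & blk r i (size (pu p) + i')].
Proof.
move=> Cp hi hi' ht bit bi't; have wp := cat_wf HC Cp.
have [r Cr [pu_r pl_r blk_r]] := cat_comp_exists HC Cp (cat_adjoint HC Cp) erefl.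
have bii' : blk p i i' by rewrite blk_sym in bi't; exact: blk_trans bit bi't.
exists r => //; split; rewrite ?blk_r //.
- exact: comprel_adjoint_upper hi hi' bii'.
- exact: (comprel_adjoint_lower wp hi hi ht bit bit).
- exact: comprel_adjoint_lower wp hi hi' ht bit bi't.
Qed.

End Adjoint.

Section Arcs.
Variables (A : Type) (inv : A -> A) (C : part A -> Prop).
Hypothesis HC : is_category inv C.
Hypothesis invK : involutive inv.
Implicit Types p q : part A.

Lemma cat_arc p x y z : C p -> x < y -> y < z -> z < npts p ->
  blk p (cyc p x) (cyc p y) -> blk p (cyc p x) (cyc p z) ->
  exists2 q, C q & [/\ pu q = take (y - x).+1 (rot x (cword inv p)), blk q 0 (y - x)
    & exists2 t, t < size (pl q) & blk q 0 (size (pu q) + t)].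
Proof.
move=> Cp lt_xy lt_yz lt_zn bxy bxz; have wp := cat_wf HC Cp.
set k := (y - x).+1; set s := cword inv p; set ls := clab p.
have size_s : size s = npts p by rewrite size_cword.
have size_ls : size ls = size s by rewrite size_clab.
set q := cpart inv k (rot x s) (rot x ls).
have size_rot_ls : size (rot x ls) = size (rot x s) by rewrite !size_rot.
have le_k : k <= size (rot x s) by rewrite size_rot; lia.
have Cq : C q.
  apply: (cat_cpart_rot HC invK (k := size (pu p))); rewrite ?size_s //; try lia.
    by rewrite /npts leq_addr.
  by rewrite -cpartE.
have wq : wf q by apply: wf_cpart.
have npts_q : npts q = npts p by rewrite npts_cpart // size_rot.
have pu_q : size (pu q) = k by rewrite size_pu_cpart.
have blk_q t t' : t + x < npts p -> t' + x < npts p ->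
    blk q (cyc q t) (cyc q t') = (nth 0 ls (t + x) == nth 0 ls (t' + x)).
  move=> ht ht'; rewrite blk_cyc ?npts_q; try lia.
  by rewrite clab_cpart // !nth_rot // size_ls size_s.
move: bxy bxz; rewrite !blk_cyc //; try lia; move=> /eqP bxy /eqP bxz.
exists q => //; split => //.
  rewrite -(cyc_upper (p := q) (t := 0)) ?pu_q // -(cyc_upper (p := q) (t := y - x)) ?pu_q //.
  by rewrite blk_q ?add0n ?subnK ?bxy //; lia.
have lower_z : k <= cyc q (z - x) < npts q.
  rewrite cyc_lt ?npts_q ?andbT; last lia.
  by rewrite -{1}pu_q cyc_lower // pu_q npts_q; lia.
exists (cyc q (z - x) - k); first by move: lower_z; rewrite /npts pu_q; lia.
rewrite pu_q subnKC; last lia.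
rewrite -(cyc_upper (p := q) (t := 0)) ?pu_q // blk_q ?add0n ?subnK ?bxz //; lia.
Qed.

Lemma cat_arc_mirror p x y z : C p -> x < y -> y < z -> z < npts p ->
  blk p (cyc p x) (cyc p y) -> blk p (cyc p x) (cyc p z) ->
  exists2 r, C r & [/\ pu r = take (y - x).+1 (rot x (cword inv p)), pl r = pu r,
    blk r 0 (y - x), blk r 0 (y - x).+1 & blk r 0 ((y - x).+1 + (y - x))].
Proof.
move=> Cp lt_xy lt_yz lt_zn bxy bxz.
have [q Cq [pu_q b0 [t ht bt]]] := cat_arc Cp lt_xy lt_yz lt_zn bxy bxz.
have size_pu_q : size (pu q) = (y - x).+1.
  by rewrite pu_q size_takel // size_rot size_cword; lia.
have bt' : blk q (y - x) (size (pu q) + t) by rewrite blk_sym in b0; exact: blk_trans b0 bt.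
have [||r Cr [pu_r pl_r b1 b2 b3]] := cat_double HC (i' := y - x) Cq _ _ ht bt bt'.
  1-2: by rewrite size_pu_q.
by exists r => //; split; rewrite ?pl_r ?pu_r // -size_pu_q // -[size (pu q)]addn0.
Qed.

End Arcs.

Section Blocks.
Variable A : Type.
Implicit Types p r : part A.

Lemma blk_cyc_mirror r k : size (pu r) = k.+1 -> size (pl r) = k.+1 ->
  blk r 0 k -> blk r 0 k.+1 -> blk r 0 (k.+1 + k) ->
  blk r (cyc r k) (cyc r k.+1) /\ blk r (cyc r k) (cyc r (k.+1 + k)).
Proof.
move=> pu_r pl_r b1 b2 b3; rewrite /cyc pu_r pl_r ltnSn ltnn ltnNge leq_addr /=.
rewrite subnn subn0 addKn addnK; rewrite blk_sym in b1.
by split; [apply: blk_trans b1 b3 | apply: blk_trans b1 b2].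
Qed.

Lemma count_iota_cyc p (P : pred nat) :
  count P (iota 0 (npts p)) = count (P \o cyc p) (iota 0 (npts p)).
Proof.
transitivity (count P [seq cyc p t | t <- iota 0 (npts p)]); last by rewrite count_map.
suff /permP -> : perm_eq [seq cyc p t | t <- iota 0 (npts p)] (iota 0 (npts p)) by [].
apply: uniq_perm; rewrite ?iota_uniq //.
  rewrite map_inj_in_uniq ?iota_uniq // => a b; rewrite !mem_iota !add0n => ha hb e.
  by rewrite -(cycK ha) e cycK.
move=> t; rewrite [RHS]mem_iota add0n; apply/mapP/idP => [[u + ->] | ht].
  by rewrite mem_iota add0n => /cyc_lt.
by exists (cyc p t); rewrite ?cycK // mem_iota add0n cyc_lt.
Qed.

Lemma count_iota_ge3 (P : pred nat) n : 3 <= count P (iota 0 n) ->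
  exists x y z, [/\ x < y, y < z, z < n & [/\ P x, P y & P z]].
Proof.
rewrite -size_filter.
have : sorted ltn (filter P (iota 0 n)).
  by apply: sorted_filter; [exact: ltn_trans | exact: iota_ltn_sorted].
have : forall t, t \in filter P (iota 0 n) -> P t && (t < n).
  by move=> t; rewrite mem_filter mem_iota add0n.
case: (filter P (iota 0 n)) => [|x [|y [|z s]]] // mem /= /and3P [xy yz _] _.
have /andP [Px _] : P x && (x < n) by apply: mem; rewrite inE eqxx.
have /andP [Py _] : P y && (y < n) by apply: mem; rewrite !inE eqxx orbT.
have /andP [Pz zn] : P z && (z < n) by apply: mem; rewrite !inE eqxx !orbT.
by exists x, y, z.
Qed.

Lemma cyc_triple_of_block p i : 3 <= block_size p i ->
  exists x y z, [/\ x < y, y < z, z < npts p,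
    blk p (cyc p x) (cyc p y) & blk p (cyc p x) (cyc p z)].
Proof.
rewrite /block_size count_iota_cyc.
move=> /count_iota_ge3 [x [y [z [xy yz zn [/= bix biy biz]]]]].
rewrite blk_sym in bix; exists x, y, z; split => //; exact: blk_trans bix _.
Qed.

Lemma wf_onebl (w w' : seq A) : wf (onebl w w').
Proof. by rewrite /wf /npts size_nseq. Qed.

Lemma peq_onebl p : (forall j, j < npts p -> blk p 0 j) -> peq p (onebl (pu p) (pl p)).
Proof.
move=> b0; split => // i j; rewrite /blk /npts /=.
case: (ltnP i (npts p)) => hi; case: (ltnP j (npts p)) => hj //=; rewrite !nth_nseq hi hj.
have /and3P [_ _ /eqP <-] := b0 i hi; have /and3P [_ _ /eqP <-] := b0 j hj.
by rewrite eqxx.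
Qed.

End Blocks.

Theorem cat_onebl_of_block (A : Type) (inv : A -> A) (C : part A -> Prop) :
  involutive inv -> is_category inv C ->
  forall p i, C p -> 3 <= block_size p i -> exists c, C (onebl [:: c; inv c] [:: c; inv c]).
Proof.
move=> invK HC p i Cp /cyc_triple_of_block [x [y [z [xy yz zn bxy bxz]]]].
have [r Cr [pu_r pl_r b1 b2 b3]] := cat_arc_mirror HC invK Cp xy yz zn bxy bxz.
set d := y - x in pu_r b1 b2 b3.
have size_pu_r : size (pu r) = d.+1.
  by rewrite pu_r size_takel // size_rot size_cword; lia.
have [U [c pu_rE]] : exists U c, pu r = rcons U c.
  by case/lastP: (pu r) size_pu_r => [|U c] // _; exists U, c.
have size_U : size U = d by move: size_pu_r; rewrite pu_rE size_rcons => -[].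
have size_pl_r : size (pl r) = d.+1 by rewrite pl_r.
(* In the cyclic order of r, the last upper point d and the last lower point d.+1
   are adjacent and lie in the block of 0 together with d.+1 + d. *)
have [b4 b5] := blk_cyc_mirror size_pu_r size_pl_r b1 b2 b3.
have [||r' Cr' [pu_r' pl_r' b'1 b'2 b'3]] := cat_arc_mirror HC invK Cr (ltnSn d) _ _ b4 b5.
- by rewrite -[X in X < _]addn0 ltn_add2l subn_gt0.
- by rewrite /npts size_pu_r size_pl_r; lia.
rewrite subSnn in pu_r' b'1 b'2 b'3.
have pu_r'E : pu r' = [:: c; inv c].
  rewrite pu_r' /cword pl_r pu_rE -size_U rev_rcons -cats1 -catA rot_size_cat.
  by rewrite /= take0.
exists c; rewrite -pu_r'E -{2}pl_r'.
apply: (cat_repr HC Cr' (wf_onebl _ _)); apply: peq_onebl => j.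
rewrite /npts pl_r' pu_r'E; case: j => [|[|[|[|j]]]] // _.
by apply: (blk_trans b'1); rewrite blk_sym.
Qed.

Theorem lemma6p1 (C : part bool -> Prop) (HC : is_category xyinv C)
  (Heven : forall p, C p -> forall i, i < npts p -> ~~ odd (block_size p i))
  (H4 : exists p, C p /\ exists2 i, i < npts p & 4 <= block_size p i) :
  C (onebl [:: xc; xc] [:: xc; xc]) \/ C (onebl [:: yc; yc] [:: yc; yc]).
Proof.
have [p [Cp [i _ big_i]]] := H4.
have [c Cc] := cat_onebl_of_block (fun b => erefl) HC Cp (ltnW big_i).
by case: c Cc; [right | left].
Qed.
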